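(* Let $m<n$ and $1\le k\le n$. Then $$\chi(X(k,n,m))=\sum_{k_1+k_2=k}t^{k_2(m-k_1)+\frac12k_2(n-m-k_2)}\chi_{\Lambda^{k_2}(\mathbb{C}^{n-m})}(t^{\rho_{n-m}})\,\chi(X^\vee(k_1,n,m)),$$ where terms involving empty spaces are omitted.
   Context: For a $k$-dimensional space $K$: $X(k,n,m)=\{(I,J)\in\mathrm{Hom}(\mathbb{C}^m_x,K)\oplus\mathrm{Hom}^{\mathrm{st}}(K,\mathbb{C}^n_y)\}/GL(K)$ with $J$ injective, and $X^\vee(k_1,n,m)$ is defined the same way with $\dim K=k_1$ but with the stability on $I$ (i.e. $I:\mathbb{C}^m_x\to K$ surjective, $J$ arbitrary). $\chi(Y)=\chi(Y,\sum_i(-t)^i\Omega^i_Y)$ is the Hirzebruch genus, equivariant for $\mathbb{C}^\times_q\times T_x\times T_y$ ($T_x\subset GL_m$, $T_y\subset GL_n$ maximal tori), defined by localization as a rational function; $\mathbb{C}^\times_q$ scales $\mathrm{Hom}(\mathbb{C}^m_x,K)$ with weight $+1$ and acts trivially on $\mathrm{Hom}(K,\mathbb{C}^n_y)$. $\rho_N=\mathrm{diag}(\frac{N-1}{2},\dots,\frac{1-N}{2})$ and $\chi_{\Lambda^{j}(\mathbb{C}^N)}(t^{\rho_N})$ is the character of $\Lambda^j(\mathbb{C}^N)$ at $\mathrm{diag}(t^{(N-1)/2},\dots,t^{(1-N)/2})$. *)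

From HB Require Import structures.
From mathcomp Require Import all_boot all_order all_algebra.
Unset Printing Implicit Defensive.
Import Order.TTheory GRing.Theory Num.Theory.
Local Open Scope ring_scope.

(* Everything lives in an arbitrary field F;
   the equivariant parameters are  q (for C^x_q), x_i (T_x, i < m),
   y_j (T_y, j < n) and s = t^(1/2) (so t = s^2).
   The torus acts on (I,J) by  I |-> q * I * x^{-1},  J |-> y * J.
   Localization contribution of a tangent weight w (character of T_pY):
       ch(Lambda_{-t} T^*_p) / ch(Lambda_{-1} T^*_p) factor
     = (1 - t w^{-1}) / (1 - w^{-1}). *)
Definition hfac {F : fieldType} (t w : F) : F := (1 - t / w) / (1 - w^-1).

(* X(k,n,m): fixed points are the coordinate k-subspaces K = C^S of C^n,
   S subset of [n], |S| = k (with I = 0); tangent weights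
   q y_s / x_i  (Hom(C^m,K))  and  y_j / y_s, j notin S  (T Gr(k,n)). *)
Definition chiX {F : fieldType} (k n m : nat) (t q : F)
    (x : 'I_m -> F) (y : 'I_n -> F) : F :=
  \sum_(S : {set 'I_n} | #|S| == k)
     \prod_(a in S) ((\prod_(i < m) hfac t (q * y a / x i)) *
                     (\prod_(j in ~: S) hfac t (y j / y a))).

(* X^vee(k1,n,m): fixed points are the coordinate quotients C^m ->> C^T,
   T subset of [m], |T| = k1 (with J = 0); tangent weights
   x_a / x_i, i notin T  (quotient Grassmannian)  and  q y_j / x_a
   (Hom(K, C^n)). *)
Definition chiXv {F : fieldType} (k1 n m : nat) (t q : F)
    (x : 'I_m -> F) (y : 'I_n -> F) : F :=
  \sum_(T : {set 'I_m} | #|T| == k1)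
     \prod_(a in T) ((\prod_(i in ~: T) hfac t (x a / x i)) *
                     (\prod_(j < n) hfac t (q * y j / x a))).

(* character of Lambda^j(C^N) at t^{rho_N} = diag(s^(N-1), s^(N-3), ..., s^(1-N)),
   i.e. the j-th elementary symmetric function of these N values. *)
Definition chiLambda_rho {F : fieldType} (N j : nat) (s : F) : F :=
  \sum_(A : {set 'I_N} | #|A| == j)
     \prod_(i in A) s ^ ((N%:Z - 1) - 2 * (i : nat)%:Z).

From HB Require Import structures.
From mathcomp Require Import all_boot all_order all_algebra.
From mathcomp Require Import ring zify.
Import Order.TTheory GRing.Theory Num.Theory.
Local Open Scope ring_scope.
Set Implicit Arguments. Unset Strict Implicit. Unset Printing Implicit Defensive.

(* We let the index sets and coordinates be
   arbitrary ([genusX], [genusXv]) and prove the expansion of [genusX] in terms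
   of [genusXv] by induction on [#|A| + #|B|].  As rational functions of one
   coordinate [w = y c], both sides only have simple poles at the other
   coordinates, so it suffices to compare constant terms and residues.  The
   constant term reduces to the configuration [(A :\ c, B)] through the
   q-Pascal rule (to the dual configuration, exchanging X with X^vee and t with
   t^-1, when [#|A| = #|B|]); the residue at [z v] reduces to
   [(A :\ c, B :\ v)]; the residues at the [y b] cancel in pairs.  Finally the
   Gaussian binomial in [t = s^2] is [s^(j(N-j))] times the character of
   [Lambda^j(C^N)] at [t^rho_N]. *)

Section PartialFractions.
Variable F : fieldType.

Definition mobius (c d p w : F) := c + d / (w - p).

Lemma mobius_mul_pole (c d p e p' w : F) : p != p' ->
  (d != 0 -> w != p) -> (e != 0 -> w != p') ->
  mobius c d p w * (e / (w - p')) =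
  d / (w - p) * (e / (p - p')) + mobius c d p p' * e / (w - p').
Proof.
move=> pp' hwp hwp'; rewrite /mobius.
have [->|d0] := eqVneq d 0; first by ring.
have [->|e0] := eqVneq e 0; first by ring.
have h1 : w - p != 0 by rewrite subr_eq0 hwp.
have h2 : w - p' != 0 by rewrite subr_eq0 hwp'.
have h3 : p - p' != 0 by rewrite subr_eq0.
have h4 : p' - p != 0 by rewrite subr_eq0 eq_sym.
by field; rewrite h1 h2 h3 h4.
Qed.

Lemma prod_mobius_seq (R : eqType) (p c d : R -> F) (s : seq R) w :
  uniq s -> {in s &, injective p} -> {in s, forall r, d r != 0 -> w != p r} ->
  \prod_(r <- s) mobius (c r) (d r) (p r) w =
  \prod_(r <- s) c r +
  \sum_(r <- s) d r * (\prod_(j <- s | j != r) mobius (c j) (d j) (p j) (p r)) / (w - p r).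
Proof.
elim: s w => [|a s IH] w /=; first by rewrite !big_nil addr0.
move=> /andP[as_ us] inj hw.
have injs : {in s &, injective p}.
  by move=> u v us' vs; apply: inj; rewrite inE ?us' ?vs orbT.
have pa r : r \in s -> p a != p r.
  by move=> rs; apply: contraNneq as_ => /inj -> //; rewrite ?mem_head ?inE ?rs ?orbT.
have prod_a r : r \in s -> \prod_(j <- a :: s | j != r) mobius (c j) (d j) (p j) (p r) =
    mobius (c a) (d a) (p a) (p r) * \prod_(j <- s | j != r) mobius (c j) (d j) (p j) (p r).
  by move=> rs; rewrite big_cons ifT //; apply: contraNneq as_ => ->.
have prod_s : \prod_(j <- s | j != a) mobius (c j) (d j) (p j) (p a) =
              \prod_(j <- s) mobius (c j) (d j) (p j) (p a).
  rewrite big_seq_cond [RHS]big_seq; apply: eq_bigl => j.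
  by case: eqVneq => [->|]; rewrite ?(negPf as_) ?andbT.
rewrite !big_cons eqxx /= prod_s IH //; last by move=> r rs _; rewrite pa.
rewrite IH //; last by move=> r rs; apply: hw; rewrite inE rs orbT.
rewrite mulrDr big_distrr /=.
under [X in _ + X = _]eq_big_seq => r rs.
  rewrite mobius_mul_pole; first over.
  - exact: pa.
  - exact: hw (mem_head _ _).
  - have rs' : r \in a :: s by rewrite inE rs orbT.
    by move=> e0; apply: hw rs' _; apply: contraNneq e0 => ->; rewrite mul0r.
rewrite big_split /= -big_distrr /=.
under [X in _ = _ + (_ + X)]eq_big_seq => r rs do rewrite prod_a // mulrCA.
rewrite /mobius; ring.
Qed.

Lemma prod_mobius (R : finType) (p c d : R -> F) w :
  injective p -> (forall r, d r != 0 -> w != p r) ->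
  \prod_r mobius (c r) (d r) (p r) w =
  \prod_r c r + \sum_r d r * (\prod_(j | j != r) mobius (c j) (d j) (p j) (p r)) / (w - p r).
Proof.
move=> inj hw; apply: prod_mobius_seq => [|u v _ _ /inj|r _] //; first exact: index_enum_uniq.
exact: hw.
Qed.

Lemma exchange_sum_div (X R : finType) (P : pred X) (a : X -> F) (D : X -> R -> F) g :
  \sum_(x | P x) a x * \sum_r D x r / g r = \sum_r (\sum_(x | P x) a x * D x r) / g r.
Proof.
under eq_bigr do rewrite big_distrr /=.
rewrite exchange_big /=; apply: eq_bigr => r _.
by rewrite big_distrl /=; apply: eq_bigr => x _; rewrite mulrA.
Qed.

End PartialFractions.

Section HirzebruchFactors.
Variable F : fieldType.

Definition hirz (t u v : F) := (u - t * v) / (u - v).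

Lemma hfac_div (t u v : F) : u != 0 -> v != 0 -> hfac t (u / v) = hirz t u v.
Proof.
move=> u0 v0; rewrite /hfac /hirz.
have [->|uv] := eqVneq u v.
  by rewrite divff // subrr !invr0 !mulr0 invr1 subrr invr0 mulr0.
have uv0 : u - v != 0 by rewrite subr_eq0.
by field; rewrite u0 v0 uv0.
Qed.

Lemma hirz_swap (t u v : F) : t != 0 -> hirz t u v = t * hirz t^-1 v u.
Proof.
move=> t0; rewrite /hirz.
have [->|uv] := eqVneq u v; first by rewrite !subrr !invr0 !mulr0.
have uv0 : u - v != 0 by rewrite subr_eq0.
have vu0 : v - u != 0 by rewrite subr_eq0 eq_sym.
by field; rewrite t0 uv0 vu0.
Qed.

Definition hirz_at (t : F) (o : option bool) (p w : F) : F :=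
  match o with Some true => hirz t p w | Some false => hirz t w p | None => 1 end.

Definition mobius_const (t : F) (o : option bool) : F :=
  if o is Some true then t else 1.

Definition mobius_num (t : F) (o : option bool) (p : F) : F :=
  match o with Some true => (t - 1) * p | Some false => (1 - t) * p | None => 0 end.

Lemma hirz_at_mobius t o (p w : F) : (o != None -> w != p) ->
  hirz_at t o p w = mobius (mobius_const t o) (mobius_num t o p) p w.
Proof.
case: o => [b|] /= hw; last by rewrite /mobius mul0r addr0.
have wp : w - p != 0 by rewrite subr_eq0 hw.
have pw : p - w != 0 by rewrite subr_eq0 eq_sym hw.
by case: b; rewrite /hirz /mobius; field; rewrite ?wp ?pw.
Qed.

Lemma prod_hirz_at (R : finType) t (o : R -> option bool) (p : R -> F) w :
  injective p -> (forall r, o r != None -> w != p r) ->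
  \prod_r hirz_at t (o r) (p r) w =
  \prod_r mobius_const t (o r) +
  \sum_r mobius_num t (o r) (p r) *
         (\prod_(j | j != r) hirz_at t (o j) (p j) (p r)) / (w - p r).
Proof.
move=> inj hw; under eq_bigr => r _ do rewrite (hirz_at_mobius t (hw r)).
rewrite prod_mobius //; last first.
  by move=> r; case: (o r) (hw r) => [b|] /= hwr; [move=> _; apply: hwr | rewrite eqxx].
congr (_ + _); apply: eq_bigr => r _; congr (_ * _ / _); apply: eq_bigr => j jr.
by rewrite hirz_at_mobius // => _; apply: contra jr => /eqP /inj ->.
Qed.

Lemma prod_hirz_at_if (X : finType) (P Q : pred X) t b (p : X -> F) w :
  \prod_(i | P i) hirz_at t (if Q i then Some b else None) (p i) w =
  \prod_(i | P i && Q i) hirz_at t (Some b) (p i) w.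
Proof. by rewrite [RHS]big_mkcondr; apply: eq_bigr => i _; case: (Q i). Qed.

End HirzebruchFactors.

Section SubsetSums.
Variables (F : fieldType) (K : finType).

Lemma sum_subsets_gt (A : {set K}) k (f : {set K} -> F) :
  (#|A| < k)%N -> \sum_(S : {set K} | (S \subset A) && (#|S| == k)) f S = 0.
Proof.
move=> Ak; rewrite big_pred0 // => S; apply/andP => -[/subset_leq_card SA /eqP Sk].
by move: Ak; rewrite -Sk ltnNge SA.
Qed.

Lemma sum_subsets0 (A : {set K}) (f : {set K} -> F) :
  \sum_(S : {set K} | (S \subset A) && (#|S| == 0%N)) f S = f set0.
Proof.
by rewrite (big_pred1 set0) // => S; rewrite cards_eq0 andb_idl // => /eqP ->; apply: sub0set.
Qed.

Lemma setD1_id (A : {set K}) x : x \notin A -> A :\ x = A.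
Proof. by move=> xA; apply/setP => i; rewrite !inE; case: eqVneq => // ->; rewrite (negPf xA). Qed.

Lemma sum_subsets_in (A : {set K}) x k (f : {set K} -> F) : x \in A ->
  \sum_(S : {set K} | (S \subset A) && (#|S| == k.+1) && (x \in S)) f S =
  \sum_(S : {set K} | (S \subset A :\ x) && (#|S| == k)) f (x |: S).
Proof.
move=> xA; rewrite (reindex_onto (fun S => x |: S) (fun S => S :\ x)); last first.
  by move=> S /andP[_ xS]; rewrite setD1K.
apply: eq_bigl => S; case: (boolP (x \in S)) => xS.
  rewrite subsetD1 xS andbF /=; apply/negP => /andP[_ /eqP eS].
  by move: xS; rewrite -eS setD11.
rewrite setU1K // eqxx andbT setU11 andbT cardsU1 xS eqSS.
by rewrite subsetD1 xS andbT subUset sub1set xA.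
Qed.

Lemma sum_subsets_notin (A : {set K}) x k (f : {set K} -> F) :
  \sum_(S : {set K} | (S \subset A) && (#|S| == k) && (x \notin S)) f S =
  \sum_(S : {set K} | (S \subset A :\ x) && (#|S| == k)) f S.
Proof. by apply: eq_bigl => S; rewrite subsetD1 andbAC. Qed.

End SubsetSums.

Section Genera.
Variables (F : fieldType) (t : F) (I J : finType) (y : I -> F) (z : J -> F).

(* [genusX A B k] is the localization sum of [chi(X(k, #|A|, #|B|))] with
   torus coordinates [y] on [C^n] and [z = x / q] on [C^m]; [genusXv] is the
   one of [X^vee]. *)
Definition termX (A : {set I}) (B : {set J}) (S : {set I}) : F :=
  \prod_(a in S) ((\prod_(b in A :\: S) hirz t (y b) (y a)) *
                  \prod_(v in B) hirz t (y a) (z v)).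

Definition genusX (A : {set I}) (B : {set J}) (k : nat) : F :=
  \sum_(S : {set I} | (S \subset A) && (#|S| == k)) termX A B S.

Definition termXv (A : {set I}) (B : {set J}) (T : {set J}) : F :=
  \prod_(a in T) ((\prod_(i in B :\: T) hirz t (z a) (z i)) *
                  \prod_(b in A) hirz t (y b) (z a)).

Definition genusXv (A : {set I}) (B : {set J}) (k : nat) : F :=
  \sum_(T : {set J} | (T \subset B) && (#|T| == k)) termXv A B T.

Lemma genusX_gt (A : {set I}) (B : {set J}) k : (#|A| < k)%N -> genusX A B k = 0.
Proof. exact: sum_subsets_gt. Qed.

Lemma genusXv_gt (A : {set I}) (B : {set J}) k : (#|B| < k)%N -> genusXv A B k = 0.
Proof. exact: sum_subsets_gt. Qed.

Lemma genusX0 (A : {set I}) (B : {set J}) : genusX A B 0 = 1.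
Proof. by rewrite /genusX sum_subsets0 /termX big_set0. Qed.

Lemma genusXv0 (A : {set I}) (B : {set J}) : genusXv A B 0 = 1.
Proof. by rewrite /genusXv sum_subsets0 /termXv big_set0. Qed.

Lemma termX_swap (A : {set I}) (B : {set J}) b (S : {set I}) : b \in A -> b \notin S ->
  termX A B S * ((\prod_(i in A :\: (b |: S)) hirz t (y i) (y b)) *
                 \prod_(v in B) hirz t (y b) (z v)) =
  termX A B (b |: S) * \prod_(a in S) hirz t (y b) (y a).
Proof.
move=> bA bS; have bAS : b \in A :\: S by rewrite inE bS bA.
have AbS : (A :\: S) :\ b = A :\: (b |: S) by rewrite setDDl setUC.
rewrite /termX (big_setU1 _ bS) /=.
under eq_bigr => a _ do rewrite (big_setD1 b bAS) /= AbS.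
by rewrite !big_split /=; ring.
Qed.

Lemma termX_peel (A : {set I}) (B : {set J}) v (S : {set I}) : S \subset A -> v \in B ->
  termX A B S * \prod_(i in A :\: S) hirz t (y i) (z v) =
  (\prod_(i in A) hirz t (y i) (z v)) * termX A (B :\ v) S.
Proof.
move=> SA vB.
have -> : termX A B S = termX A (B :\ v) S * \prod_(i in S) hirz t (y i) (z v).
  by rewrite /termX -big_split; apply: eq_bigr => a _; rewrite (big_setD1 v vB) /=; ring.
by rewrite [in RHS](big_setID S) /= (setIidPr SA); ring.
Qed.

Lemma termXv_peel (A : {set I}) (B : {set J}) v (T : {set J}) : T \subset B :\ v -> v \in B ->
  termXv A B (v |: T) * \prod_(a in T) hirz t (z v) (z a) =
  ((\prod_(i in B :\ v) hirz t (z v) (z i)) * \prod_(b in A) hirz t (y b) (z v)) *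
  termXv A (B :\ v) T.
Proof.
move=> TB vB; have vT : v \notin T by move: TB; rewrite subsetD1 => /andP[].
have BvT : (B :\ v) :\: T = B :\: (v |: T) by rewrite setDDl.
rewrite /termXv (big_setU1 _ vT) /= BvT [in RHS](big_setID T) /= (setIidPr TB) BvT; ring.
Qed.

End Genera.

Section Duality.
Variables (F : fieldType) (I J : finType) (y : I -> F) (z : J -> F).

Lemma termX_dual t A B S : t != 0 ->
  termX t y z A B S = t ^+ (#|S| * (#|A :\: S| + #|B|)) * termXv t^-1 z y B A S.
Proof.
move=> t0; rewrite /termX /termXv mulnC exprM -prodr_const -big_split /=.
apply: eq_bigr => a _; rewrite exprD.
under eq_bigr do rewrite hirz_swap //.
under [X in _ * X]eq_bigr do rewrite hirz_swap //.
by rewrite !big_split /= !prodr_const; ring.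
Qed.

Lemma genusX_dual t A B k : t != 0 ->
  genusX t y z A B k = t ^+ (k * (#|A| - k + #|B|)) * genusXv t^-1 z y B A k.
Proof.
move=> t0; rewrite /genusX /genusXv big_distrr /=; apply: eq_bigr => S /andP[SA /eqP Sk].
by rewrite termX_dual // cardsDS // Sk.
Qed.

End Duality.

Section PoleAtOnePoint.
Variables (F : fieldType) (t : F) (I J : finType) (y : I -> F) (z : J -> F).
Hypotheses (y_inj : injective y) (z_inj : injective z) (yz : forall i j, y i != z j).
Variables (A : {set I}) (B : {set J}) (c : I).
Hypothesis cA : c \in A.

Definition pole (r : I + J) : F := match r with inl i => y i | inr v => z v end.

Lemma pole_inj : injective pole.
Proof.
case=> [i|v] [i'|v'] /= e.
- by rewrite (y_inj e).
- by move: (yz i v'); rewrite e eqxx.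
- by move: (yz i' v); rewrite e eqxx.
- by rewrite (z_inj e).
Qed.

(* As functions of [w = y c], [termX A B S] and [termXv A B T] are products of
   factors [hirz_at t (kind r) (pole r) w], [r : I + J], times a constant. *)
Definition kindX (S : {set I}) (r : I + J) : option bool :=
  match r with
  | inl i => if c \in S then (if i \in A :\: S then Some true else None)
             else (if i \in S then Some false else None)
  | inr v => if (c \in S) && (v \in B) then Some false else None
  end.

Definition kindXv (T : {set J}) (r : I + J) : option bool :=
  match r with inl _ => None | inr v => if v \in T then Some false else None end.

Definition restX (S : {set I}) : F := termX t y z (A :\ c) B (S :\ c).

Lemma kindX_pole (S : {set I}) r : kindX S r != None -> y c != pole r.
Proof.
case: r => [i|v] /=; last by rewrite yz.
have yci : i != c -> y c != y i by apply: contraNneq => /y_inj ->.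
case: ifP => cS; case: ifP => // iS _; apply: yci.
  by apply: contraTneq iS => ->; rewrite inE cS.
by apply: contraTneq iS => ->; rewrite cS.
Qed.

Lemma kindXv_pole (T : {set J}) r : kindXv T r != None -> y c != pole r.
Proof. by case: r => [//|v] /=; rewrite yz. Qed.

Lemma prod_kindX_in (S : {set I}) (P : pred (I + J)) (w : F) : c \in S ->
  \prod_(r | P r) hirz_at t (kindX S r) (pole r) w =
  (\prod_(i | P (inl i) && (i \in A :\: S)) hirz t (y i) w) *
  \prod_(v | P (inr v) && (v \in B)) hirz t w (z v).
Proof. by move=> cS; rewrite big_sumType /= cS !prod_hirz_at_if. Qed.

Lemma prod_kindX_notin (S : {set I}) (P : pred (I + J)) (w : F) : c \notin S ->
  \prod_(r | P r) hirz_at t (kindX S r) (pole r) w =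
  \prod_(i | P (inl i) && (i \in S)) hirz t w (y i).
Proof.
move=> cS; rewrite big_sumType /= (negPf cS) prod_hirz_at_if.
by rewrite [X in _ * X]big1 ?mulr1.
Qed.

Lemma prod_kindXv (T : {set J}) (P : pred (I + J)) (w : F) :
  \prod_(r | P r) hirz_at t (kindXv T r) (pole r) w =
  \prod_(v | P (inr v) && (v \in T)) hirz t w (z v).
Proof. by rewrite big_sumType /= prod_hirz_at_if big1 ?mul1r. Qed.

Lemma termX_hirz_at (S : {set I}) :
  termX t y z A B S = restX S * \prod_r hirz_at t (kindX S r) (pole r) (y c).
Proof.
rewrite /restX; have [cS|cS] := boolP (c \in S).
  have AS : (A :\ c) :\: (S :\ c) = A :\: S.
    by apply/setP => i; rewrite !inE; case: eqVneq => // ->; rewrite cS.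
  rewrite prod_kindX_in // /termX (big_setD1 c cS) /= AS mulrC.
  by congr (_ * _); congr (_ * _); apply: eq_bigl => i.
have cAS : c \in A :\: S by rewrite inE cS cA.
have AS : (A :\: S) :\ c = (A :\ c) :\: S by rewrite setDDl setDDl setUC.
rewrite prod_kindX_notin // (setD1_id cS) /termX -big_split /=; apply: eq_bigr => a aS.
by rewrite (big_setD1 c cAS) /= AS; ring.
Qed.

Lemma termXv_hirz_at (T : {set J}) :
  termXv t y z A B T =
  termXv t y z (A :\ c) B T * \prod_r hirz_at t (kindXv T r) (pole r) (y c).
Proof.
rewrite prod_kindXv /termXv -big_split /=; apply: eq_bigr => a aT.
by rewrite (big_setD1 c cA) /=; ring.
Qed.

Definition cofactorX (S : {set I}) r :=
  \prod_(j | j != r) hirz_at t (kindX S j) (pole j) (pole r).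

Definition cofactorXv (T : {set J}) r :=
  \prod_(j | j != r) hirz_at t (kindXv T j) (pole j) (pole r).

Definition resX k r := \sum_(S : {set I} | (S \subset A) && (#|S| == k))
  restX S * (mobius_num t (kindX S r) (pole r) * cofactorX S r).

Definition resXv k r := \sum_(T : {set J} | (T \subset B) && (#|T| == k))
  termXv t y z (A :\ c) B T * (mobius_num t (kindXv T r) (pole r) * cofactorXv T r).

Lemma genusX_partial_fraction k :
  genusX t y z A B k =
  \sum_(S : {set I} | (S \subset A) && (#|S| == k))
     restX S * \prod_r mobius_const t (kindX S r) +
  \sum_r resX k r / (y c - pole r).
Proof.
rewrite /genusX; under eq_bigr => S _.
  rewrite termX_hirz_at (prod_hirz_at t pole_inj (@kindX_pole S)) mulrDr.
  over.
by rewrite big_split /= exchange_sum_div.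
Qed.

Lemma genusXv_partial_fraction k :
  genusXv t y z A B k = genusXv t y z (A :\ c) B k + \sum_r resXv k r / (y c - pole r).
Proof.
rewrite /genusXv; under eq_bigr => T _.
  rewrite termXv_hirz_at (prod_hirz_at t pole_inj (@kindXv_pole T)) mulrDr.
  rewrite big1 ?mulr1; last by case=> [//|v] _ /=; case: ifP.
  over.
by rewrite big_split /= exchange_sum_div.
Qed.

Lemma prod_mobius_const_kindX (S : {set I}) :
  \prod_r mobius_const t (kindX S r) = if c \in S then t ^+ #|A :\: S| else 1.
Proof.
rewrite big_sumType /= [X in _ * X]big1 ?mulr1 => [|v _]; last by case: ifP.
case: ifP => cS; last by rewrite big1 // => i _; case: ifP.
by rewrite -prodr_const [RHS]big_mkcond; apply: eq_bigr => i _; case: ifP.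
Qed.

Lemma constX_succ k :
  \sum_(S : {set I} | (S \subset A) && (#|S| == k.+1))
     restX S * \prod_r mobius_const t (kindX S r) =
  genusX t y z (A :\ c) B k.+1 + t ^+ (#|A| - k.+1) * genusX t y z (A :\ c) B k.
Proof.
rewrite (bigID (fun S : {set I} => c \in S)) /= sum_subsets_in // sum_subsets_notin addrC.
congr (_ + _).
  apply: eq_bigr => S /andP[SA _]; have cS : c \notin S by move: SA; rewrite subsetD1 => /andP[].
  by rewrite prod_mobius_const_kindX (negPf cS) mulr1 /restX (setD1_id cS).
rewrite /genusX big_distrr; apply: eq_bigr => S /andP[SA /eqP Sk].
have cS : c \notin S by move: SA; rewrite subsetD1 => /andP[].
have cSA : c |: S \subset A by rewrite subUset sub1set cA (subset_trans SA) // subD1set.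
rewrite prod_mobius_const_kindX setU11 /restX setU1K // mulrC.
by rewrite cardsDS // cardsU1 cS Sk.
Qed.

Definition residue_coef v := (1 - t) * z v *
  ((\prod_(i in B :\ v) hirz t (z v) (z i)) * \prod_(b in A :\ c) hirz t (y b) (z v)).

Lemma resX_inr k v : v \in B ->
  resX k.+1 (inr v) = residue_coef v * genusX t y z (A :\ c) (B :\ v) k.
Proof.
move=> vB; rewrite /resX (bigID (fun S : {set I} => c \in S)) /= sum_subsets_in //.
rewrite [X in _ + X]big1 ?addr0 => [|S /andP[_ cS]]; last by rewrite (negPf cS) mul0r mulr0.
rewrite /genusX big_distrr; apply: eq_bigr => S /andP[SA _] /=.
have cS : c \notin S by move: SA; rewrite subsetD1 => /andP[].
rewrite setU11 vB /restX setU1K // /cofactorX prod_kindX_in ?setU11 //=.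
have -> : \prod_(i | i \in A :\: (c |: S)) hirz t (y i) (z v) =
          \prod_(i in (A :\ c) :\: S) hirz t (y i) (z v) by rewrite setDDl.
have -> : \prod_(u | (inr u != inr v :> I + J) && (u \in B)) hirz t (z v) (z u) =
          \prod_(u in B :\ v) hirz t (z v) (z u) by apply: eq_bigl => u; rewrite !inE.
transitivity ((1 - t) * z v * \prod_(u in B :\ v) hirz t (z v) (z u) *
  (termX t y z (A :\ c) B S * \prod_(i in (A :\ c) :\: S) hirz t (y i) (z v))); first ring.
by rewrite termX_peel // /residue_coef; ring.
Qed.

Lemma resX_notin_B k v : v \notin B -> resX k (inr v) = 0.
Proof. by move=> vB; apply: big1 => S _; rewrite /= (negPf vB) andbF mul0r mulr0. Qed.

Lemma resX_pair b (S : {set I}) : b \in A :\ c -> S \subset (A :\ c) :\ b ->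
  restX (c |: S) * (mobius_num t (kindX (c |: S) (inl b)) (pole (inl b)) *
                    cofactorX (c |: S) (inl b)) +
  restX (b |: S) * (mobius_num t (kindX (b |: S) (inl b)) (pole (inl b)) *
                    cofactorX (b |: S) (inl b)) = 0.
Proof.
move=> bAc; rewrite subsetD1 => /andP[SAc bS].
have cS : c \notin S by move: SAc; rewrite subsetD1 => /andP[].
have [bc bA] : b != c /\ b \in A by apply/andP; rewrite -in_setD1.
have cbS : c \notin b |: S by rewrite !inE negb_or eq_sym bc cS.
have bAcS : b \in A :\: (c |: S) by rewrite !inE negb_or bc bS bA.
rewrite /restX setU1K // (setD1_id cbS) /cofactorX prod_kindX_in ?setU11 //.
rewrite prod_kindX_notin //= setU11 bAcS (negPf cbS) setU11 /=.
have -> : \prod_(i | (i != b) && (i \in A :\: (c |: S))) hirz t (y i) (y b) =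
          \prod_(i in (A :\ c) :\: (b |: S)) hirz t (y i) (y b).
  apply: eq_bigl => i; rewrite !inE !negb_or.
  by case: (i == b); case: (i == c); case: (i \in A); case: (i \in S).
have -> : \prod_(i | (i != b) && (i \in b |: S)) hirz t (y b) (y i) =
          \prod_(i in S) hirz t (y b) (y i).
  by apply: eq_bigl => i; rewrite !inE; case: eqVneq => [->|] //=; rewrite (negPf bS).
have := termX_swap t y z B bAc bS.
set P := termX _ _ _ _ _ S; set Q := termX _ _ _ _ _ (b |: S) => swapPQ.
transitivity ((t - 1) * y b * (P * (\prod_(i in (A :\ c) :\: (b |: S)) hirz t (y i) (y b) *
   \prod_(v in B) hirz t (y b) (z v)) - Q * \prod_(i in S) hirz t (y b) (y i))); first ring.
by rewrite swapPQ subrr mulr0.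
Qed.

Lemma resX_inl k b : resX k.+1 (inl b) = 0.
Proof.
rewrite /resX; have [bAc|bAc] := boolP (b \in A :\ c); last first.
  apply: big1 => S /andP[SA _] /=; case: ifP => cS; case: ifP => bS; rewrite ?mul0r ?mulr0 //.
    move: bS; rewrite !inE => /andP[bS bA]; move: bAc; rewrite !inE bA andbT negbK.
    by move=> /eqP ebc; move: bS; rewrite ebc cS.
  move: bAc; rewrite !inE (subsetP SA) // andbT negbK => /eqP ebc.
  by move: bS; rewrite ebc cS.
rewrite (bigID (fun S : {set I} => c \in S)) /= sum_subsets_in // sum_subsets_notin.
rewrite (bigID (fun S : {set I} => b \in S)) /= [X in _ + X](bigID (fun S : {set I} => b \in S)) /=.
rewrite sum_subsets_notin sum_subsets_in //.
rewrite big1 ?add0r => [|S /andP[_ bS]]; last first.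
  by rewrite /= setU11 !inE negb_or bS andbF mul0r mulr0.
rewrite [X in _ + (_ + X)]big1 ?addr0 => [|S /andP[/andP[SAc _] bS]]; last first.
  have cS : c \notin S by move: SAc; rewrite subsetD1 => /andP[].
  by rewrite /= (negPf cS) (negPf bS) mul0r mulr0.
by rewrite -big_split /=; apply: big1 => S /andP[SAcb _]; apply: resX_pair.
Qed.

Lemma resXv_inl k b : resXv k (inl b) = 0.
Proof. by apply: big1 => T _; rewrite mul0r mulr0. Qed.

Lemma resXv0 r : resXv 0 r = 0.
Proof. by rewrite /resXv sum_subsets0; case: r => [b|v] /=; rewrite ?inE mul0r mulr0. Qed.

Lemma resXv_notin_B k v : v \notin B -> resXv k (inr v) = 0.
Proof.
move=> vB; apply: big1 => T /andP[TB _] /=.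
by rewrite ifN ?mul0r ?mulr0 //; apply: contra vB; apply: (subsetP TB).
Qed.

Lemma resXv_inr k v : v \in B ->
  resXv k.+1 (inr v) = residue_coef v * genusXv t y z (A :\ c) (B :\ v) k.
Proof.
move=> vB; rewrite /resXv (bigID (fun T : {set J} => v \in T)) /= sum_subsets_in //.
rewrite [X in _ + X]big1 ?addr0 => [|T /andP[_ vT]]; last by rewrite (negPf vT) mul0r mulr0.
rewrite /genusXv big_distrr; apply: eq_bigr => T /andP[TB _] /=.
have vT : v \notin T by move: TB; rewrite subsetD1 => /andP[].
rewrite setU11 /cofactorXv prod_kindXv.
have -> : \prod_(u | (inr u != inr v :> I + J) && (u \in v |: T)) hirz t (z v) (z u) =
          \prod_(u in T) hirz t (z v) (z u).
  apply: eq_bigl => u; rewrite -[inr u != _]/(u != v) !inE.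
  by case: eqVneq => [->|]; rewrite ?(negPf vT).
transitivity ((1 - t) * z v *
  (termXv t y z (A :\ c) B (v |: T) * \prod_(u in T) hirz t (z v) (z u))).
  by rewrite /=; ring.
by rewrite termXv_peel // /residue_coef; ring.
Qed.

Lemma genusX_step k (al : nat -> F) :
  (forall v, v \in B -> genusX t y z (A :\ c) (B :\ v) k =
     \sum_(k1 < k.+1) al k1.+1 * genusXv t y z (A :\ c) (B :\ v) k1) ->
  genusX t y z (A :\ c) B k.+1 + t ^+ (#|A| - k.+1) * genusX t y z (A :\ c) B k =
     \sum_(k1 < k.+2) al k1 * genusXv t y z (A :\ c) B k1 ->
  genusX t y z A B k.+1 = \sum_(k1 < k.+2) al k1 * genusXv t y z A B k1.
Proof.
move=> IHres IHconst; rewrite genusX_partial_fraction constX_succ IHconst.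
under [RHS]eq_bigr do rewrite genusXv_partial_fraction mulrDr.
rewrite big_split /= exchange_sum_div; congr (_ + _).
apply: eq_bigr => -[b|v] _; congr (_ / _).
  by rewrite resX_inl big1 // => k1 _; rewrite resXv_inl mulr0.
have [vB|vB] := boolP (v \in B); last first.
  by rewrite resX_notin_B // big1 // => k1 _; rewrite resXv_notin_B ?mulr0.
rewrite resX_inr // IHres // [RHS]big_ord_recl /= resXv0 mulr0 add0r big_distrr.
by apply: eq_bigr => k1 _; rewrite /bump leq0n add1n resXv_inr // mulrCA.
Qed.

End PoleAtOnePoint.

Section GaussianBinomials.
Variable F : fieldType.

Fixpoint qbinom (t : F) (N k : nat) : F :=
  match k, N with
  | 0, _ => 1
  | _.+1, 0 => 0
  | k.+1, N.+1 => qbinom t N k.+1 + t ^+ (N - k) * qbinom t N k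
  end.

Arguments qbinom : simpl never.

Lemma qbinom0 t N : qbinom t N 0 = 1.
Proof. by case: N. Qed.

Lemma qbinomS t N k : qbinom t N.+1 k.+1 = qbinom t N k.+1 + t ^+ (N - k) * qbinom t N k.
Proof. by []. Qed.

Lemma qbinom_gt t N k : (N < k)%N -> qbinom t N k = 0.
Proof. by elim: N k => [|N IHN] [|k] // Nk; rewrite qbinomS !IHN ?mulr0 ?addr0 // ltnW. Qed.

Lemma qbinom1 t k : qbinom t 1 k = if (k <= 1)%N then 1 else 0.
Proof.
case: k => [|[|k]]; first by rewrite qbinom0.
  by rewrite qbinomS qbinom0 qbinom_gt // add0r subnn expr0 mul1r.
by rewrite qbinomS !qbinom_gt // mulr0 addr0.
Qed.

Definition qexpansion (t : F) (a b : nat) (G : nat -> F) (k : nat) : F :=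
  \sum_(k1 < k.+1) t ^+ ((k - k1) * (b - k1)) * qbinom t (a - b) (k - k1) * G k1.

Lemma qexpansion_eq t a (G : nat -> F) k : qexpansion t a a G k = G k.
Proof.
rewrite /qexpansion subnn big_ord_recr /= big1 ?add0r => [|k1 _].
  by rewrite subnn mul0n expr0 qbinom0 !mul1r.
by rewrite qbinom_gt ?mulr0 ?mul0r // subn_gt0.
Qed.

Lemma qexpansion_pascal t a b (G : nat -> F) k :
  (b <= a)%N -> (forall k1, (b < k1)%N -> G k1 = 0) ->
  qexpansion t a.+1 b G k.+1 = qexpansion t a b G k.+1 + t ^+ (a - k) * qexpansion t a b G k.
Proof.
move=> ba G0; rewrite /qexpansion subSn // big_ord_recr [X in _ = X + _]big_ord_recr /=.
rewrite subnn !mul0n !expr0 !qbinom0 addrAC big_distrr -big_split /=; congr (_ + _).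
apply: eq_bigr => -[k1 /= k1k] _; rewrite subSn // qbinomS.
case: (ltnP b k1) => [bk1|k1b]; first by rewrite G0 // !mulr0 addr0.
case: (ltnP (a - b) (k - k1)) => [jN|jN].
  by rewrite !qbinom_gt //; [ring | apply: ltnW].
rewrite mulrDr mulrDl; congr (_ + _); rewrite !mulrA -!exprD; congr (_ * _ * _).
by congr (_ ^+ _); rewrite mulSn; lia.
Qed.

Lemma qexpansion_diag t a (G : nat -> F) k :
  t != 0 -> (k <= a)%N -> (forall j, (a < j)%N -> G j = 0) ->
  t ^+ (k.+1 * (a - k.+1 + a.+1)) * G k.+1 + t ^+ (a - k) * (t ^+ (k * (a - k + a.+1)) * G k) =
  t ^+ (k.+1 * (a - k + a)) * qexpansion t^-1 a.+1 a G k.+1.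
Proof.
move=> t0 ka G0; rewrite /qexpansion subSnn big_ord_recr big_ord_recr /=.
rewrite big1 ?add0r => [|i _]; last first.
  by rewrite qbinom1 ifN ?mulr0 ?mul0r // -ltnNge; have := ltn_ord i; lia.
rewrite subSnn subnn mul0n mul1n expr0 qbinom0 qbinom1 /= !mulr1 !mul1r.
move: ka; rewrite leq_eqVlt => /orP[/eqP->|ka].
  by rewrite G0 // mulr0 add0r subnn expr0 !mul1r addr0 !add0n mulnC.
have -> : (a - k.+1 + a.+1 = a - k + a)%N by lia.
have -> : (k.+1 * (a - k + a) = a - k + k * (a - k + a.+1) + (a - k))%N by nia.
have tak : t ^+ (a - k) != 0 by rewrite expf_neq0.
by rewrite !exprD exprVn; field.
Qed.

End GaussianBinomials.

Section Expansion.
Variable F : fieldType.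

Lemma genusX_qexpansion_step (t : F) (I J : finType) (y : I -> F) (z : J -> F)
    (A : {set I}) (B : {set J}) c k :
  injective y -> injective z -> (forall i j, y i != z j) -> c \in A ->
  (forall v, v \in B -> genusX t y z (A :\ c) (B :\ v) k =
     qexpansion t #|A :\ c| #|B :\ v| (genusXv t y z (A :\ c) (B :\ v)) k) ->
  genusX t y z (A :\ c) B k.+1 + t ^+ (#|A| - k.+1) * genusX t y z (A :\ c) B k =
     qexpansion t #|A| #|B| (genusXv t y z (A :\ c) B) k.+1 ->
  genusX t y z A B k.+1 = qexpansion t #|A| #|B| (genusXv t y z A B) k.+1.
Proof.
move=> yi zi yz cA IHres IHconst.
apply: (genusX_step yi zi yz cA
  (al := fun k1 => t ^+ ((k.+1 - k1) * (#|B| - k1)) * qbinom t (#|A| - #|B|) (k.+1 - k1))) => //.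
move=> v vB; rewrite IHres //; apply: eq_bigr => k1 _.
have eA : #|A| = (#|A :\ c|).+1 by rewrite (cardsD1 c A) cA.
have eB : #|B| = (#|B :\ v|).+1 by rewrite (cardsD1 v B) vB.
by rewrite eA eB !subSS.
Qed.

(* When [#|A| = #|B|], removing [c] breaks [#|B| <= #|A|]; the constant term is
   then obtained from the expansion of the dual configuration. *)
Lemma genusX_const_diag (t : F) (I J : finType) (y : I -> F) (z : J -> F)
    (A : {set I}) (B : {set J}) c k :
  t != 0 -> c \in A -> #|B| = #|A| ->
  genusX t^-1 z y B (A :\ c) k.+1 =
    qexpansion t^-1 #|B| #|A :\ c| (genusXv t^-1 z y B (A :\ c)) k.+1 ->
  genusX t y z (A :\ c) B k.+1 + t ^+ (#|A| - k.+1) * genusX t y z (A :\ c) B k =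
  qexpansion t #|A| #|B| (genusXv t y z (A :\ c) B) k.+1.
Proof.
move=> t0 cA eBA IH.
have eB : #|B| = (#|A :\ c|).+1 by rewrite eBA (cardsD1 c A) cA.
rewrite -eBA qexpansion_eq eB.
have [ak|ka] := ltnP #|A :\ c| k.
  by rewrite !genusX_gt ?genusXv_gt ?mulr0 ?addr0 ?eB // ltnW.
have -> : genusXv t y z (A :\ c) B k.+1 =
          t ^+ (k.+1 * (#|B| - k.+1 + #|A :\ c|)) * genusX t^-1 z y B (A :\ c) k.+1.
  by rewrite genusX_dual ?invr_eq0 // invrK mulrA exprVn mulfV ?expf_neq0 // mul1r.
rewrite IH !genusX_dual // eB !subSS.
by apply: qexpansion_diag => // j; apply: genusXv_gt.
Qed.

Lemma genusX_qexpansion (t : F) (I J : finType) (y : I -> F) (z : J -> F)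
    (A : {set I}) (B : {set J}) k :
  t != 0 -> injective y -> injective z -> (forall i j, y i != z j) -> (#|B| <= #|A|)%N ->
  genusX t y z A B k = qexpansion t #|A| #|B| (genusXv t y z A B) k.
Proof.
have [n] := ubnP (#|A| + #|B|).
elim: n => // n IHn in t I J y z A B k *; rewrite ltnS => ABn t0 yi zi yz BA.
case: k => [|k]; first by rewrite genusX0 /qexpansion big_ord1 genusXv0 mul0n expr0 qbinom0 !mulr1.
have [A0|[c cA]] := set_0Vmem A.
  have B0 : #|B| = 0%N by apply/eqP; rewrite -leqn0 -(cards0 I) -A0.
  by rewrite A0 cards0 -B0 qexpansion_eq genusX_gt ?genusXv_gt ?A0 ?cards0 ?B0.
have eA : #|A| = (#|A :\ c|).+1 by rewrite (cardsD1 c A) cA.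
apply: (genusX_qexpansion_step yi zi yz cA) => [v vB|].
  have eB : #|B| = (#|B :\ v|).+1 by rewrite (cardsD1 v B) vB.
  by apply: IHn => //; lia.
have [BA'|BA'] := ltnP #|B| #|A|.
  rewrite !IHn //; try lia.
  by rewrite eA subSS qexpansion_pascal //; [lia | move=> j; apply: genusXv_gt].
apply: genusX_const_diag => //; first lia.
apply: IHn; rewrite ?invr_eq0 //; try lia.
by move=> j i; rewrite eq_sym.
Qed.

End Expansion.

Section PrincipalSpecialization.
Variable F : fieldType.

Lemma ord0_notin_lift N (S : {set 'I_N}) : ord0 \notin [set lift ord0 i | i in S].
Proof. by apply/negP => /imsetP[i _ e]; move: (neq_lift ord0 i); rewrite -e eqxx. Qed.

Lemma lift_preimset N (S : {set 'I_N}) :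
  [set i | lift ord0 i \in [set lift ord0 i | i in S]] = S.
Proof. by apply/setP => i; rewrite inE mem_imset //; apply: lift_inj. Qed.

Lemma sum_card_subsets_ordS N j (f : {set 'I_N.+1} -> F) :
  \sum_(S : {set 'I_N.+1} | #|S| == j.+1) f S =
  \sum_(S : {set 'I_N} | #|S| == j.+1) f [set lift ord0 i | i in S] +
  \sum_(S : {set 'I_N} | #|S| == j) f (ord0 |: [set lift ord0 i | i in S]).
Proof.
have card_lift (S : {set 'I_N}) : #|[set lift ord0 i | i in S]| = #|S|.
  by apply: card_imset; apply: lift_inj.
rewrite (bigID (fun S : {set 'I_N.+1} => ord0 \in S)) [LHS]addrC /=; congr (_ + _).
  rewrite (reindex_onto (fun S : {set 'I_N} => [set lift ord0 i | i in S])
                        (fun S => [set i | lift ord0 i \in S])) /=; last first.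
    move=> S /andP[_ S0]; apply/setP => x; case: (unliftP ord0 x) => [i ->|->].
      by rewrite mem_imset ?inE //; apply: lift_inj.
    by rewrite (negPf S0) (negPf (ord0_notin_lift _)).
  by apply: eq_bigl => S; rewrite card_lift ord0_notin_lift lift_preimset eqxx !andbT.
rewrite (reindex_onto (fun S : {set 'I_N} => ord0 |: [set lift ord0 i | i in S])
                      (fun S => [set i | lift ord0 i \in S])) /=; last first.
  move=> S /andP[_ S0]; apply/setP => x; rewrite inE; case: (unliftP ord0 x) => [i ->|->].
    by rewrite mem_imset ?inE //; apply: lift_inj.
  by rewrite set11 S0.
apply: eq_bigl => S; rewrite cardsU1 ord0_notin_lift card_lift setU11 andbT.
have -> : [set i | lift ord0 i \in ord0 |: [set lift ord0 i | i in S]] = S.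
  by apply/setP => i; rewrite !inE eq_sym (negPf (neq_lift _ _)) mem_imset //; apply: lift_inj.
by rewrite eqxx andbT add1n eqSS.
Qed.

Lemma chiLambda_rho0 N (s : F) : chiLambda_rho N 0 s = 1.
Proof. by rewrite /chiLambda_rho (big_pred1 set0) ?big_set0 // => S; rewrite cards_eq0. Qed.

Lemma chiLambda_rho_gt N j (s : F) : (N < j)%N -> chiLambda_rho N j s = 0.
Proof.
move=> Nj; rewrite /chiLambda_rho big_pred0 // => S; apply/eqP => Sj.
by move: (max_card S); rewrite card_ord Sj leqNgt Nj.
Qed.

Lemma chiLambda_rhoS N j (s : F) : s != 0 ->
  chiLambda_rho N.+1 j.+1 s =
  s^-1 ^+ j.+1 * chiLambda_rho N j.+1 s + s ^+ N * s^-1 ^+ j * chiLambda_rho N j s.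
Proof.
move=> s0.
have exp_lift (i : 'I_N) : s ^ ((N.+1)%:Z - 1 - 2 * (lift ord0 i : nat)%:Z) =
                          s ^ ((N%:Z - 1) - 2 * (i : nat)%:Z) * s^-1.
  by rewrite lift0 -exprN1 -expfzDr //; congr (_ ^ _); lia.
rewrite /chiLambda_rho sum_card_subsets_ordS !big_distrr /=; congr (_ + _).
  apply: eq_bigr => S /eqP Sj; rewrite big_imset /=; last by move=> a b _ _; apply: lift_inj.
  by rewrite -Sj -prodr_const -big_split /=; apply: eq_bigr => i _; rewrite exp_lift mulrC.
apply: eq_bigr => S /eqP Sj; rewrite big_setU1 ?ord0_notin_lift //=.
rewrite big_imset /=; last by move=> a b _ _; apply: lift_inj.
have -> : (N.+1)%:Z - 1 - 2 * (nat_of_ord (ord0 : 'I_N.+1))%:Z = N%:Z by rewrite /=; lia.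
rewrite -exprnP -Sj -prodr_const -mulrA -big_split /=; congr (_ * _).
by apply: eq_bigr => i _; rewrite exp_lift mulrC.
Qed.

Lemma chiLambda_rho_qbinom (s : F) N j : s != 0 -> (j <= N)%N ->
  s ^+ (j * (N - j)) * chiLambda_rho N j s = qbinom (s ^+ 2) N j.
Proof.
move=> s0; have sX e : s ^+ e != 0 by rewrite expf_neq0.
elim: N j => [|N IHN] [|j] // jN; rewrite ?chiLambda_rho0 ?qbinom0 ?mul0n ?expr0 ?mulr1 //.
rewrite chiLambda_rhoS // qbinomS mulrDr; congr (_ + _).
  have [jN'|Nj] := ltnP j N; last by rewrite chiLambda_rho_gt ?qbinom_gt ?mulr0 //; lia.
  rewrite -IHN //.
  have -> : (j.+1 * (N.+1 - j.+1) = j.+1 * (N - j.+1) + j.+1)%N by rewrite subSS; nia.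
  by rewrite exprD exprVn; field.
rewrite -IHN // -exprM !mulrA -!exprD.
have -> : (j.+1 * (N.+1 - j.+1) + N = 2 * (N - j) + j * (N - j) + j)%N by rewrite subSS; nia.
by rewrite !exprD exprVn; field.
Qed.

End PrincipalSpecialization.

Section Localization.
Variables (F : fieldType) (n m : nat) (t q : F) (x : 'I_m -> F) (y : 'I_n -> F).
Hypotheses (q0 : q != 0) (x0 : forall i, x i != 0) (y0 : forall j, y j != 0).

Let z i := x i / q.

Let z_neq0 i : z i != 0.
Proof. by rewrite mulf_neq0 ?invr_eq0. Qed.

Lemma chiX_genusX k : chiX k n m t q x y = genusX t y z setT setT k.
Proof.
rewrite /chiX /genusX; apply: eq_big => [S|S _]; first by rewrite subsetT.
apply: eq_bigr => a _; rewrite mulrC setTD; congr (_ * _).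
  by apply: eq_bigr => j _; rewrite hfac_div.
rewrite [RHS](eq_bigl xpredT) => [|i]; last by rewrite inE.
apply: eq_bigr => i _; rewrite -hfac_div ?z_neq0 //; congr hfac.
by rewrite /z; field; rewrite q0 x0.
Qed.

Lemma chiXv_genusXv k : chiXv k n m t q x y = genusXv t y z setT setT k.
Proof.
rewrite /chiXv /genusXv; apply: eq_big => [T|T _]; first by rewrite subsetT.
apply: eq_bigr => a _; rewrite setTD; congr (_ * _).
  apply: eq_bigr => i _; rewrite -hfac_div ?z_neq0 //; congr hfac.
  by rewrite /z; field; rewrite q0 x0.
rewrite [RHS](eq_bigl xpredT) => [|j]; last by rewrite inE.
apply: eq_bigr => j _; rewrite -hfac_div ?z_neq0 //; congr hfac.
by rewrite /z; field; rewrite q0 x0.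
Qed.

End Localization.

Unset Implicit Arguments.

Theorem theorem2p6 (F : fieldType) (k n m : nat) (s q : F)
    (x : 'I_m -> F) (y : 'I_n -> F) :
  (m < n)%N -> (1 <= k <= n)%N ->
  s != 0 -> q != 0 ->
  (forall i, x i != 0) -> (forall j, y j != 0) ->
  injective x -> injective y ->
  (forall i j, q * y j != x i) ->
  chiX k n m (s ^+ 2) q x y =
  \sum_(k1 < k.+1 | (k1 <= m)%N && (k - k1 <= n - m)%N)
     s ^+ (2 * ((k - k1) * (m - k1)) + (k - k1) * (n - m - (k - k1)))%N
     * chiLambda_rho (n - m) (k - k1) s
     * chiXv k1 n m (s ^+ 2) q x y.
Proof.
move=> mn _ s0 q0 x0 y0 x_inj y_inj qyx.
have z_inj : injective (fun i => x i / q).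
  by move=> i j /(congr1 (fun u => u * q)); rewrite /= !divfK // => /x_inj.
have yz i j : y i != x j / q.
  by apply: contraNneq (qyx j i) => ->; rewrite mulrC divfK.
rewrite chiX_genusX // genusX_qexpansion ?expf_neq0 ?cardsT ?card_ord //; last exact: ltnW.
rewrite /qexpansion [RHS]big_mkcond /=; apply: eq_bigr => k1 _.
case: ifP => [/andP[k1m kk1]|/negbT].
  by rewrite chiXv_genusXv // exprD -chiLambda_rho_qbinom // exprM mulrA -!exprM mulnA.
rewrite negb_and -!ltnNge => /orP[mk1|kk1].
  by rewrite genusXv_gt ?mulr0 // cardsT card_ord.
by rewrite qbinom_gt ?mulr0 ?mul0r.
Qed.
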